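(* If $G$ is a Tutte-Berge graph, then the induced subgraph of $G$ on $D(G)$ has no edges, i.e. $D(G)$ consists of isolated vertices only.
   Context: $\nu(G)$ is the matching number of $G$. For $U\subseteq V(G)$, $N_G(U)$ is the set of vertices adjacent to at least one vertex of $U$. $G$ is a Tutte-Berge graph if there exists an independent set $T$ of $G$ with $|T| = |N_G(T)| + |V(G)| - 2\nu(G)$. $D(G)$ is the set of vertices of $G$ left uncovered by at least one maximum matching of $G$. *)

From mathcomp Require Import all_boot.
Set Implicit Arguments. Unset Strict Implicit. Unset Printing Implicit Defensive.

Definition simple_graph (T : finType) (e : rel T) : Prop :=
  symmetric e /\ irreflexive e.

Definition is_edge (T : finType) (e : rel T) (S : {set T}) : bool :=
  [exists u, exists v, (S == [set u; v]) && e u v].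

Definition matching (T : finType) (e : rel T) (M : {set {set T}}) : bool :=
  [forall S in M, is_edge e S] && trivIset M.

Definition nu (T : finType) (e : rel T) : nat :=
  \max_(M : {set {set T}} | matching e M) #|M|.

Definition max_matching (T : finType) (e : rel T) (M : {set {set T}}) : bool :=
  matching e M && (#|M| == nu e).

Definition nbhd (T : finType) (e : rel T) (U : {set T}) : {set T} :=
  [set v | [exists u in U, e u v]].

Definition independent (T : finType) (e : rel T) (U : {set T}) : bool :=
  [forall u in U, forall v in U, ~~ e u v].

Definition tutte_berge (T : finType) (e : rel T) : Prop :=
  exists T0 : {set T}, independent e T0 /\
    #|T0| + 2 * nu e = #|nbhd e T0| + #|T|.

Definition Dset (T : finType) (e : rel T) : {set T} :=
  [set x | [exists M, max_matching e M && (x \notin cover M)]].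

From mathcomp Require Import all_boot.
From mathcomp Require Import zify.

Set Implicit Arguments.
Unset Strict Implicit.
Unset Printing Implicit Defensive.

(* Let X be a set witnessing the Tutte-Berge property.  For any matching M,
   each edge of M contains at most one vertex of the independent set X, and
   when it does, its other end lies in N(X); hence at most |N(X)| vertices of
   X are covered by M, so at least |X| - |N(X)| = |V| - 2 nu vertices of X are
   left uncovered.  A maximum matching leaves exactly |V| - 2 nu vertices
   uncovered, so all of them lie in X.  Thus D(G) is contained in the
   independent set X. *)

Section Matchings.

Variables (T : finType) (e : rel T).

Lemma independentP (X : {set T}) :
  reflect {in X &, forall u v, ~~ e u v} (independent e X).
Proof.
apply: (iffP forallP) => [indX u v uX vX | indX u].
  by move: (indX u); rewrite uX => /forallP /(_ v); rewrite vX.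
by apply/implyP => uX; apply/forallP => v; apply/implyP; apply: indX.
Qed.

Lemma is_edgeP (B : {set T}) :
  reflect (exists a b, B = [set a; b] /\ e a b) (is_edge e B).
Proof.
apply: (iffP existsP) => [[a /existsP [b /andP [/eqP -> eab]]] | [a [b [-> eab]]]].
  by exists a, b.
by exists a; apply/existsP; exists b; rewrite eqxx.
Qed.

Lemma matching_edge (M : {set {set T}}) :
  matching e M -> {in M, forall B, exists a b, B = [set a; b] /\ e a b}.
Proof. by case/andP => /forall_inP eM _ B /eM /is_edgeP. Qed.

Lemma card_coverI (M : {set {set T}}) (X : {set T}) :
  trivIset M -> #|cover M :&: X| = \sum_(B in M) #|B :&: X|.
Proof.
have cardI A : #|A :&: X| = \sum_(x in A | x \in X) 1.
  by rewrite sum1_card; apply: eq_card => x; rewrite !inE.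
by move=> tM; rewrite cardI big_trivIset_cond //; apply: eq_bigr => B _; rewrite cardI.
Qed.

Hypothesis e_sym : symmetric e.

Lemma card_edgeI_independent_le (X : {set T}) a b : independent e X -> e a b ->
  #|[set a; b] :&: X| <= #|[set a; b] :&: nbhd e X|.
Proof.
move=> /independentP indX.
case: (set_0Vmem ([set a; b] :&: X)) => [-> | [x]]; first by rewrite cards0.
wlog ->: a b / x = a => [hyp | ].
  rewrite !inE => /andP [/orP [/eqP xab | /eqP xab] xX] eab.
  - by apply: (hyp _ _ xab _ eab); rewrite !inE xX xab eqxx.
  - by rewrite setUC; apply: (hyp _ _ xab); rewrite ?(e_sym b) // !inE xX xab eqxx.
rewrite !inE eqxx /= => aX eab.
have bX : b \notin X by apply: contraL eab => bX; apply: indX.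
have leI1 : #|[set a; b] :&: X| <= 1.
  rewrite -(cards1 a) subset_leq_card //; apply/subsetP => y.
  by rewrite !inE => /andP [/orP [] // /eqP ->]; rewrite (negbTE bX).
apply: (leq_trans leI1); rewrite card_gt0; apply/set0Pn; exists b.
by rewrite !inE eqxx orbT; apply/existsP; exists a; rewrite aX.
Qed.

Lemma card_coverI_independent_le (M : {set {set T}}) (X : {set T}) :
  matching e M -> independent e X -> #|cover M :&: X| <= #|nbhd e X|.
Proof.
move=> mM indX; have /andP [_ tM] := mM.
apply: (@leq_trans #|cover M :&: nbhd e X|); last exact/subset_leq_card/subsetIr.
rewrite !card_coverI //; apply: leq_sum => B /(matching_edge mM) [a [b [-> eab]]].
exact: card_edgeI_independent_le.
Qed.

Hypothesis e_irr : irreflexive e.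

Lemma card_cover_matching (M : {set {set T}}) :
  matching e M -> #|cover M| = 2 * #|M|.
Proof.
move=> mM; have /andP [_ tM] := mM.
have [_] := leq_card_cover M; rewrite tM => /eqP ->.
rewrite mulnC -sum_nat_const; apply: eq_bigr => B /(matching_edge mM) [a [b [-> eab]]].
by rewrite cards2; case: eqVneq eab => [-> | //]; rewrite e_irr.
Qed.

Lemma uncovered_sub_tight_independent (M : {set {set T}}) (X : {set T}) :
  matching e M -> independent e X -> #|X| + 2 * #|M| = #|nbhd e X| + #|T| ->
  ~: cover M \subset X.
Proof.
move=> mM indX tight; apply/setIidPl/eqP; rewrite eqEcard subsetIl /=.
have splitX : #|cover M :&: X| + #|~: cover M :&: X| = #|X|.
  by rewrite -(cardsID (cover M) X) setDE !(setIC X).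
have := card_coverI_independent_le mM indX.
have := card_cover_matching mM.
have := cardsC (cover M).
lia.
Qed.

Lemma Dset_sub_tight_independent (X : {set T}) :
  independent e X -> #|X| + 2 * nu e = #|nbhd e X| + #|T| -> Dset e \subset X.
Proof.
move=> indX tight; apply/subsetP => x.
rewrite inE => /existsP [M /andP [/andP [mM /eqP cardM] xM]].
have tightM : #|X| + 2 * #|M| = #|nbhd e X| + #|T| by rewrite cardM.
by apply: (subsetP (uncovered_sub_tight_independent mM indX tightM)); rewrite inE.
Qed.

End Matchings.

Theorem lemma2p10 (T : finType) (e : rel T) :
  simple_graph e -> tutte_berge e ->
  forall u v, u \in Dset e -> v \in Dset e -> ~~ e u v.
Proof.
move=> [e_sym e_irr] [X [indX tight]] u v uD vD.
have /subsetP DX := Dset_sub_tight_independent e_sym e_irr indX tight.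
by apply: (independentP _ _ indX); apply: DX.
Qed.
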